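(* Let $n\ne0,-1$, let $r$ be a constant and $\xi(x)$ a nonvanishing smooth function, and set $p=4(1+\frac1n)^2r^2$. Then for arbitrary constants $c_1,c_2$, the function $u(t,x)=\varphi(\omega)|\xi|^{\frac1{2n+2}}\exp\big(\frac rn\int\frac{dx}{\xi}\big)$, $\omega=t-\int\frac{dx}{\xi}$, where $\varphi$ is defined implicitly by $$\int\frac{n(\varphi^n-1)}{2r\varphi^{n+1}+c_1}\,d\varphi=\omega+c_2,$$ is a solution of $$|\xi|^{-\frac{3n+4}{2n+2}}\exp\Big(r\int\frac{dx}{\xi}\Big)u_{tt}-(u^nu_x)_x-\frac{\xi_x^2-2\xi\xi_{xx}-p}{4(n+1)\xi^2}u^{n+1}=0.$$
   Context: Here $\int dx/\xi$ denotes a fixed antiderivative of $1/\xi$. *)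

From Stdlib Require Import Reals.
Open Scope R_scope.

Definition smooth (f : R -> R) : Prop :=
  exists D : nat -> R -> R,
    D 0%nat = f /\ forall (k : nat) (x : R), derivable_pt_lim (D k) x (D (S k) x).

From Stdlib Require Import Reals Lra.
Open Scope R_scope.

(* The ansatz is u(t,x) = phi(omega) K(x) with omega = t - F x, F' = 1/xi and
   amplitude K = |xi|^(1/(2n+2)) exp((r/n) F).  The proof has three parts.
   1. Calculus: derivative rules for the building blocks (|f|^c, Rpower, ...)
      and for profiles evaluated along the wave, where d/dt acts on phi only
      and d/dx brings the factor -1/xi (section TravellingWave).
   2. The profile: differentiating the implicit relation G(phi w) = w + c2
      gives the first-order ODE phi' = h(phi), h(P) = (2rP^(n+1)+c1)/(n(P^n-1)),
      hence phi'' = h'(phi) h(phi).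
   3. Reduction: with these derivatives the left-hand side of the PDE equals
      K^(n+1) times a rational expression in phi, phi^n, xi, xi', xi'', and
      that expression vanishes identically (reduced_residual_zero); the key
      point is K^n = |xi|^(n/(2n+2)) exp(r F), which absorbs the weight
      |xi|^(-(3n+4)/(2n+2)) exp(r F) up to the factor 1/xi^2.
   Only two derivatives of xi are used; the smoothness hypothesis is not. *)

Lemma D_value f x l l' : derivable_pt_lim f x l -> l = l' -> derivable_pt_lim f x l'.
Proof. now intros H <-. Qed.

Lemma D_const c x : derivable_pt_lim (fun _ => c) x 0.
Proof. exact (derivable_pt_lim_const c x). Qed.

Lemma D_id x : derivable_pt_lim (fun y => y) x 1.
Proof. exact (derivable_pt_lim_id x). Qed.

Lemma D_plus f g x df dg : derivable_pt_lim f x df -> derivable_pt_lim g x dg ->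
  derivable_pt_lim (fun y => f y + g y) x (df + dg).
Proof. exact (derivable_pt_lim_plus f g x df dg). Qed.

Lemma D_minus f g x df dg : derivable_pt_lim f x df -> derivable_pt_lim g x dg ->
  derivable_pt_lim (fun y => f y - g y) x (df - dg).
Proof. exact (derivable_pt_lim_minus f g x df dg). Qed.

Lemma D_mult f g x df dg : derivable_pt_lim f x df -> derivable_pt_lim g x dg ->
  derivable_pt_lim (fun y => f y * g y) x (df * g x + f x * dg).
Proof. exact (derivable_pt_lim_mult f g x df dg). Qed.

Lemma D_div f g x df dg : derivable_pt_lim f x df -> derivable_pt_lim g x dg -> g x <> 0 ->
  derivable_pt_lim (fun y => f y / g y) x ((df * g x - dg * f x) / (g x)²).
Proof. exact (derivable_pt_lim_div f g x df dg). Qed.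

Lemma D_comp f g x df dg : derivable_pt_lim g x dg -> derivable_pt_lim f (g x) df ->
  derivable_pt_lim (fun y => f (g y)) x (df * dg).
Proof. intros Hg Hf; exact (derivable_pt_lim_comp g f x dg df Hg Hf). Qed.

Lemma D_exp f x df : derivable_pt_lim f x df ->
  derivable_pt_lim (fun y => exp (f y)) x (exp (f x) * df).
Proof. intro H; apply (D_comp exp f); [exact H | apply derivable_pt_lim_exp]. Qed.

Lemma D_Rpower f x df c : derivable_pt_lim f x df -> 0 < f x ->
  derivable_pt_lim (fun y => Rpower (f y) c) x (c * Rpower (f x) (c - 1) * df).
Proof. intros H Hf; apply (D_comp (fun z => Rpower z c) f); [exact H | now apply derivable_pt_lim_power]. Qed.

Lemma D_inv f x df : derivable_pt_lim f x df -> f x <> 0 ->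
  derivable_pt_lim (fun y => / f y) x (- df / f x ^ 2).
Proof.
  intros H Hf.
  apply (derivable_pt_lim_ext (fun y => 1 / f y)); [intro; unfold Rdiv; ring |].
  eapply D_value; [apply (D_div (fun _ => 1) f); [apply D_const | exact H | exact Hf] |].
  unfold Rsqr; field; exact Hf.
Qed.

Lemma D_ln_abs f x df : derivable_pt_lim f x df -> f x <> 0 ->
  derivable_pt_lim (fun y => ln (Rabs (f y))) x (df / f x).
Proof.
  intros H Hf.
  assert (Habs : 0 < Rabs (f x)) by now apply Rabs_pos_lt.
  destruct (Rlt_or_le 0 (f x)) as [Hpos | Hneg].
  - eapply D_value.
    + apply (D_comp ln (fun y => Rabs (f y))); [| now apply derivable_pt_lim_ln].
      apply (D_comp Rabs f); [exact H | now apply Rabs_derive_1].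
    + rewrite Rabs_right by lra; field; exact Hf.
  - eapply D_value.
    + apply (D_comp ln (fun y => Rabs (f y))); [| now apply derivable_pt_lim_ln].
      apply (D_comp Rabs f); [exact H | apply Rabs_derive_2; lra].
    + rewrite Rabs_left by lra; field; exact Hf.
Qed.

(* Power of a modulus: [(|f|^c)' = c (f'/f) |f|^c], since [|f|^c = exp (c ln |f|)]. *)
Lemma D_Rpower_abs f x df c : derivable_pt_lim f x df -> f x <> 0 ->
  derivable_pt_lim (fun y => Rpower (Rabs (f y)) c) x (c * df / f x * Rpower (Rabs (f x)) c).
Proof.
  intros H Hf; unfold Rpower.
  eapply D_value.
  - apply D_exp, (D_mult (fun _ => c)); [apply D_const | apply D_ln_abs; [exact H | exact Hf]].
  - cbv beta; field; exact Hf.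
Qed.

Lemma Rpower_plus_one U c : 0 < U -> Rpower U (c + 1) = Rpower U c * U.
Proof. intros; rewrite Rpower_plus, Rpower_1; auto. Qed.

Lemma Rpower_minus_one U c : 0 < U -> Rpower U (c - 1) = Rpower U c / U.
Proof. intros; unfold Rminus; rewrite Rpower_plus, Rpower_Ropp, Rpower_1; auto. Qed.

Lemma Rpower_pos U c : 0 < Rpower U c.
Proof. apply exp_pos. Qed.

Lemma implicit_derivative (Om : R -> Prop) (G phi : R -> R) (c w l g : R) :
  open_set Om -> Om w -> (forall v, Om v -> G (phi v) = v + c) ->
  derivable_pt_lim phi w l -> derivable_pt_lim G (phi w) g -> g * l = 1.
Proof.
  intros hOm Hw himp Hphi HG.
  destruct (hOm w Hw) as [del Hdel].
  assert (Hshift : derivable_pt_lim (fun v => G (phi v)) w 1).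
  { apply (derivable_pt_lim_locally_ext (fun v => v + c) _ w (w - del) (w + del)).
    - pose proof (cond_pos del); lra.
    - intros z Hz; symmetry; apply himp, Hdel; unfold disc; apply Rabs_def1; lra.
    - eapply D_value; [apply D_plus; [apply D_id | apply D_const] | ring]. }
  exact (uniqueness_limite _ _ _ _ (D_comp G phi w g l Hphi HG) Hshift).
Qed.

Section TravellingWave.

Variables (xi F : R -> R).
Hypothesis hF : forall x, derivable_pt_lim F x (/ xi x).

Lemma wave_dt g M t x dg : derivable_pt_lim g (t - F x) dg ->
  derivable_pt_lim (fun s => g (s - F x) * M) t (dg * M).
Proof.
  intro Hg; eapply D_value.
  - apply (D_mult (fun s => g (s - F x)) (fun _ => M)); [| apply D_const].
    apply (D_comp g (fun s => s - F x)); [apply D_minus; [apply D_id | apply D_const] | exact Hg].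
  - cbv beta; ring.
Qed.

Lemma wave_dx g M t x dg dM : derivable_pt_lim g (t - F x) dg -> derivable_pt_lim M x dM ->
  derivable_pt_lim (fun y => g (t - F y) * M y) x (dg * (- / xi x) * M x + g (t - F x) * dM).
Proof.
  intros Hg HM; eapply D_value.
  - apply D_mult; [| exact HM].
    apply (D_comp g (fun y => t - F y)); [apply D_minus; [apply D_const | apply hF] | exact Hg].
  - cbv beta; ring.
Qed.

End TravellingWave.

(* The profile [phi] solves [phi' = h(phi)] with [h] the reciprocal of the
   integrand [n (P^n - 1) / (2 r P^(n+1) + c1)]; [h'] is its derivative. *)
Definition profile_slope (n r c1 P : R) : R :=
  (2 * r * Rpower P (n + 1) + c1) / (n * (Rpower P n - 1)).

Definition profile_slope_deriv (n r c1 P : R) : R :=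
  (2 * r * (n + 1) * Rpower P n * (n * (Rpower P n - 1))
   - n * (n * Rpower P (n - 1)) * (2 * r * Rpower P (n + 1) + c1))
  / (n * (Rpower P n - 1)) ^ 2.

Lemma profile_slope_derivable n r c1 P : 0 < P -> n * (Rpower P n - 1) <> 0 ->
  derivable_pt_lim (profile_slope n r c1) P (profile_slope_deriv n r c1 P).
Proof.
  intros hP hA; unfold profile_slope.
  eapply D_value.
  - apply (D_div (fun P => 2 * r * Rpower P (n + 1) + c1) (fun P => n * (Rpower P n - 1))); [| | exact hA].
    + apply D_plus; [| apply D_const].
      apply (D_mult (fun _ => 2 * r)); [apply D_const | apply (D_Rpower (fun P => P)); [apply D_id | exact hP]].
    + apply (D_mult (fun _ => n)); [apply D_const |].
      apply D_minus; [apply (D_Rpower (fun P => P)); [apply D_id | exact hP] | apply D_const].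
  - unfold profile_slope_deriv, Rsqr; replace (n + 1 - 1) with n by ring.
    field; split; intro Z; apply hA; rewrite Z; ring.
Qed.

(* The reduced equation: after substituting the ansatz and dividing by the
   common factor [K^(n+1)] (K the x-dependent amplitude), the PDE becomes this
   rational identity in [P = phi], [X = xi], [X1 = xi'], [X2 = xi''].  Here
   [k = K'/K], [V = Ux/K] and [V'] is its x-derivative. *)
Definition reduced_residual (n r c1 P X X1 X2 : R) : R :=
  let a := / (2 * n + 2) in
  let h := profile_slope n r c1 P in
  let h' := profile_slope_deriv n r c1 P in
  let k := (a * X1 + r / n) / X in
  let k' := (a * X2 * X - X1 * (a * X1 + r / n)) / X ^ 2 in
  let V := P * k - h / X in
  let V' := h' * h / X ^ 2 - h * k / X + P * k' + h * X1 / X ^ 2 in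
  h' * h / X ^ 2 - Rpower P n * (n * V ^ 2 / P + k * V + V')
  - (X1 ^ 2 - 2 * X * X2 - 4 * (1 + / n) ^ 2 * r ^ 2) / (4 * (n + 1) * X ^ 2)
    * (Rpower P n * P).

Lemma reduced_residual_zero n r c1 P X X1 X2 :
  n <> 0 -> n <> -1 -> 0 < P -> Rpower P n <> 1 -> X <> 0 ->
  reduced_residual n r c1 P X X1 X2 = 0.
Proof.
  intros hn0 hn1 hP hQ hX.
  unfold reduced_residual, profile_slope, profile_slope_deriv.
  rewrite Rpower_plus_one, Rpower_minus_one by exact hP.
  assert (hn : n + 1 <> 0) by (intro; apply hn1; lra).
  assert (h2n : 2 * n + 2 <> 0) by (intro; apply hn1; lra).
  assert (hQ1 : Rpower P n - 1 <> 0) by (intro; apply hQ; lra).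
  field; repeat split; auto; lra.
Qed.

Section Solution.

Variables (n r c1 c2 : R) (xi xi' xi'' F G phi : R -> R) (Om : R -> Prop).
Hypotheses (hn0 : n <> 0) (hn1 : n <> -1).
Hypothesis hxi' : forall x, derivable_pt_lim xi x (xi' x).
Hypothesis hxi'' : forall x, derivable_pt_lim xi' x (xi'' x).
Hypothesis hxi_nz : forall x, xi x <> 0.
Hypothesis hF : forall x, derivable_pt_lim F x (/ xi x).
Hypothesis hOm : open_set Om.
Hypothesis hphi_pos : forall w, Om w -> 0 < phi w.
Hypothesis hphi_der : forall w, Om w -> derivable_pt phi w.
Hypothesis hden : forall w, Om w -> 2 * r * Rpower (phi w) (n + 1) + c1 <> 0.
Hypothesis hG : forall w, Om w ->
  derivable_pt_lim G (phi w)
    (n * (Rpower (phi w) n - 1) / (2 * r * Rpower (phi w) (n + 1) + c1)).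
Hypothesis himp : forall w, Om w -> G (phi w) = w + c2.

Lemma two_n_plus_two_neq0 : 2 * n + 2 <> 0.
Proof. intro; apply hn1; lra. Qed.
Local Hint Resolve two_n_plus_two_neq0 : core.

Definition wave (t x : R) : R :=
  phi (t - F x) * Rpower (Rabs (xi x)) (/ (2 * n + 2)) * exp (r / n * F x).

Definition amplitude (x : R) : R :=
  Rpower (Rabs (xi x)) (/ (2 * n + 2)) * exp (r / n * F x).

Definition amplitude_log_deriv (x : R) : R := (/ (2 * n + 2) * xi' x + r / n) / xi x.

Definition amplitude_log_deriv' (x : R) : R :=
  (/ (2 * n + 2) * xi'' x * xi x - xi' x * (/ (2 * n + 2) * xi' x + r / n)) / xi x ^ 2.

Definition wave_t (t x : R) : R := profile_slope n r c1 (phi (t - F x)) * amplitude x.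

Definition wave_tt (t x : R) : R :=
  profile_slope_deriv n r c1 (phi (t - F x)) * profile_slope n r c1 (phi (t - F x))
  * amplitude x.

Definition wave_x_ratio (t x : R) : R :=
  phi (t - F x) * amplitude_log_deriv x - profile_slope n r c1 (phi (t - F x)) / xi x.

Definition wave_x_ratio' (t x : R) : R :=
  let P := phi (t - F x) in
  let h := profile_slope n r c1 P in
  profile_slope_deriv n r c1 P * h / xi x ^ 2 - h * amplitude_log_deriv x / xi x
  + P * amplitude_log_deriv' x + h * xi' x / xi x ^ 2.

Definition wave_x (t x : R) : R := amplitude x * wave_x_ratio t x.

Definition wave_xx (t x : R) : R :=
  amplitude x * (amplitude_log_deriv x * wave_x_ratio t x + wave_x_ratio' t x).

Definition flux_x (t x : R) : R :=
  n * Rpower (wave t x) (n - 1) * wave_x t x * wave_x t x + Rpower (wave t x) n * wave_xx t x.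

Lemma profile_ode w : Om w ->
  Rpower (phi w) n <> 1 /\ derivable_pt_lim phi w (profile_slope n r c1 (phi w)).
Proof.
  intro Hw.
  destruct (hphi_der w Hw) as [l Hl].
  pose proof (implicit_derivative Om G phi c2 w l _ hOm Hw himp Hl (hG w Hw)) as E.
  pose proof (hden w Hw) as HD.
  assert (HQ : Rpower (phi w) n - 1 <> 0).
  { intro HQ; rewrite HQ, Rmult_0_r in E; unfold Rdiv in E; rewrite !Rmult_0_l in E; lra. }
  split; [intro; apply HQ; lra |].
  replace (profile_slope n r c1 (phi w)) with l; [exact Hl |].
  unfold profile_slope.
  apply (Rmult_eq_reg_l (n * (Rpower (phi w) n - 1) / (2 * r * Rpower (phi w) (n + 1) + c1))).
  - rewrite E; field; auto.
  - unfold Rdiv; repeat apply Rmult_integral_contrapositive_currified; auto.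
    now apply Rinv_neq_0_compat.
Qed.

Lemma profile_second_derivative w : Om w ->
  derivable_pt_lim (fun v => profile_slope n r c1 (phi v)) w
    (profile_slope_deriv n r c1 (phi w) * profile_slope n r c1 (phi w)).
Proof.
  intro Hw; destruct (profile_ode w Hw) as [HQ Hphi].
  apply (D_comp (profile_slope n r c1) phi); [exact Hphi |].
  apply profile_slope_derivable; [now apply hphi_pos |].
  apply Rmult_integral_contrapositive_currified; [exact hn0 | intro; apply HQ; lra].
Qed.

(* [K > 0], so the wave is positive and [u^n] is a genuine power. *)
Lemma amplitude_pos x : 0 < amplitude x.
Proof. apply Rmult_lt_0_compat; [apply Rpower_pos | apply exp_pos]. Qed.

Lemma amplitude_derivable x :
  derivable_pt_lim amplitude x (amplitude x * amplitude_log_deriv x).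
Proof.
  unfold amplitude, amplitude_log_deriv; eapply D_value.
  - apply D_mult; [now apply D_Rpower_abs |].
    apply D_exp, (D_mult (fun _ => r / n)); [apply D_const | apply hF].
  - cbv beta; field; auto.
Qed.

Lemma amplitude_log_deriv_derivable x :
  derivable_pt_lim amplitude_log_deriv x (amplitude_log_deriv' x).
Proof.
  unfold amplitude_log_deriv, amplitude_log_deriv'; eapply D_value.
  - apply D_div; [| apply hxi' | apply hxi_nz].
    apply D_plus; [apply (D_mult (fun _ => _)); [apply D_const | apply hxi''] | apply D_const].
  - unfold Rsqr; cbv beta; field; auto.
Qed.

Lemma wave_factor t x : wave t x = phi (t - F x) * amplitude x.
Proof. unfold wave, amplitude; ring. Qed.

Lemma wave_dt_spec t x : Om (t - F x) ->
  derivable_pt_lim (fun s => wave s x) t (wave_t t x).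
Proof.
  intro Hw; apply (derivable_pt_lim_ext (fun s => phi (s - F x) * amplitude x));
    [intro; symmetry; apply wave_factor |].
  apply wave_dt, (proj2 (profile_ode _ Hw)).
Qed.

Lemma wave_t_dt t x : Om (t - F x) ->
  derivable_pt_lim (fun s => wave_t s x) t (wave_tt t x).
Proof.
  intro Hw; unfold wave_t, wave_tt.
  apply (wave_dt F (fun v => profile_slope n r c1 (phi v))), profile_second_derivative, Hw.
Qed.

Lemma wave_dx_spec t x : Om (t - F x) ->
  derivable_pt_lim (fun y => wave t y) x (wave_x t x).
Proof.
  intro Hw; apply (derivable_pt_lim_ext (fun y => phi (t - F y) * amplitude y));
    [intro; symmetry; apply wave_factor |].
  eapply D_value.
  - apply wave_dx; [exact hF | exact (proj2 (profile_ode _ Hw)) | apply amplitude_derivable].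
  - unfold wave_x, wave_x_ratio; field; auto.
Qed.

Lemma wave_x_ratio_dx t x : Om (t - F x) ->
  derivable_pt_lim (fun y => wave_x_ratio t y) x (wave_x_ratio' t x).
Proof.
  intro Hw; unfold wave_x_ratio, wave_x_ratio', Rdiv at 2.
  eapply D_value.
  - apply D_minus.
    + apply wave_dx; [exact hF | exact (proj2 (profile_ode _ Hw)) | apply amplitude_log_deriv_derivable].
    + apply (wave_dx xi F hF (fun v => profile_slope n r c1 (phi v)) (fun y => / xi y)).
      * apply profile_second_derivative, Hw.
      * apply D_inv; [apply hxi' | apply hxi_nz].
  - cbv zeta; field; auto.
Qed.

Lemma wave_x_dx t x : Om (t - F x) ->
  derivable_pt_lim (fun y => wave_x t y) x (wave_xx t x).
Proof.
  intro Hw; unfold wave_x, wave_xx; eapply D_value.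
  - apply D_mult; [apply amplitude_derivable | now apply wave_x_ratio_dx].
  - ring.
Qed.

Lemma flux_dx t x : Om (t - F x) ->
  derivable_pt_lim (fun y => Rpower (wave t y) n * wave_x t y) x (flux_x t x).
Proof.
  intro Hw; unfold flux_x; eapply D_value.
  - apply D_mult; [| now apply wave_x_dx].
    apply (D_Rpower (fun y => wave t y)); [now apply wave_dx_spec |].
    rewrite wave_factor; apply Rmult_lt_0_compat; [now apply hphi_pos | apply amplitude_pos].
  - cbv beta; ring.
Qed.

Lemma wave_pos t x : Om (t - F x) -> 0 < wave t x.
Proof.
  intro Hw; rewrite wave_factor.
  apply Rmult_lt_0_compat; [now apply hphi_pos | apply amplitude_pos].
Qed.

Lemma wave_Rpower t x : Om (t - F x) ->
  Rpower (wave t x) n = Rpower (phi (t - F x)) n * Rpower (amplitude x) n.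
Proof.
  intro Hw; rewrite wave_factor.
  symmetry; apply Rpower_mult_distr; [now apply hphi_pos | apply amplitude_pos].
Qed.

(* The coefficient of [u_tt] is [K^n / xi^2]: both equal
   [|xi|^(n/(2n+2) - 2) exp (r F)]. *)
Lemma weight_amplitude x :
  Rpower (Rabs (xi x)) (- ((3 * n + 4) / (2 * n + 2))) * exp (r * F x)
  = Rpower (amplitude x) n / xi x ^ 2.
Proof.
  assert (Hxi : 0 < Rabs (xi x)) by now apply Rabs_pos_lt.
  unfold amplitude.
  rewrite <- Rpower_mult_distr by (apply Rpower_pos || apply exp_pos).
  rewrite Rpower_mult.
  unfold Rpower at 3; rewrite ln_exp.
  replace (- ((3 * n + 4) / (2 * n + 2))) with (/ (2 * n + 2) * n + - INR 2)
    by (simpl; field; auto).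
  rewrite Rpower_plus, Rpower_Ropp, Rpower_pow, pow2_abs by exact Hxi.
  replace (n * (r / n * F x)) with (r * F x) by (field; exact hn0).
  unfold Rdiv; ring.
Qed.

Lemma pde_reduction t x : Om (t - F x) ->
  Rpower (Rabs (xi x)) (- ((3 * n + 4) / (2 * n + 2))) * exp (r * F x) * wave_tt t x
  - flux_x t x
  - (xi' x ^ 2 - 2 * xi x * xi'' x - 4 * (1 + / n) ^ 2 * r ^ 2) / (4 * (n + 1) * xi x ^ 2)
    * Rpower (wave t x) (n + 1)
  = Rpower (amplitude x) n * amplitude x
    * reduced_residual n r c1 (phi (t - F x)) (xi x) (xi' x) (xi'' x).
Proof.
  intro Hw.
  pose proof (hphi_pos _ Hw) as HP; pose proof (amplitude_pos x) as HK.
  unfold flux_x.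
  rewrite Rpower_minus_one, Rpower_plus_one by now apply wave_pos.
  rewrite weight_amplitude, wave_Rpower, wave_factor by exact Hw.
  unfold wave_tt, wave_x, wave_xx, wave_x_ratio, wave_x_ratio',
    amplitude_log_deriv, amplitude_log_deriv', reduced_residual.
  assert (n + 1 <> 0) by (intro; apply hn1; lra).
  field; repeat split; auto; lra.
Qed.

Lemma travelling_wave_solution :
  let p := 4 * (1 + / n) ^ 2 * r ^ 2 in
  let u := fun t x =>
    phi (t - F x) * Rpower (Rabs (xi x)) (/ (2 * n + 2)) * exp (r / n * F x) in
  exists Ut Utt Ux : R -> R -> R,
    (forall t x, Om (t - F x) ->
       derivable_pt_lim (fun s => u s x) t (Ut t x) /\
       derivable_pt_lim (fun s => Ut s x) t (Utt t x) /\
       derivable_pt_lim (fun y => u t y) x (Ux t x)) /\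
    (forall t x, Om (t - F x) ->
       exists Wx : R,
         derivable_pt_lim (fun y => Rpower (u t y) n * Ux t y) x Wx /\
         Rpower (Rabs (xi x)) (- ((3 * n + 4) / (2 * n + 2))) * exp (r * F x) * Utt t x
         - Wx
         - (xi' x ^ 2 - 2 * xi x * xi'' x - p) / (4 * (n + 1) * xi x ^ 2)
             * Rpower (u t x) (n + 1) = 0).
Proof.
  intros p u.
  exists wave_t, wave_tt, wave_x; split; intros t x Hw.
  - split; [| split]; [apply wave_dt_spec | apply wave_t_dt | apply wave_dx_spec]; exact Hw.
  - exists (flux_x t x); split; [now apply flux_dx |].
    destruct (profile_ode _ Hw) as [HQ _].
    etransitivity; [exact (pde_reduction t x Hw) |].
    rewrite reduced_residual_zero by auto; ring.
Qed.

End Solution.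

Theorem mainTheorem7
  (n r c1 c2 : R) (xi xi' xi'' F G phi : R -> R) (Om : R -> Prop)
  (hn0 : n <> 0) (hn1 : n <> -1)
  (hxi_smooth : smooth xi)
  (hxi' : forall x, derivable_pt_lim xi x (xi' x))
  (hxi'' : forall x, derivable_pt_lim xi' x (xi'' x))
  (hxi_nz : forall x, xi x <> 0)
  (hF : forall x, derivable_pt_lim F x (/ xi x))
  (hOm : open_set Om)
  (hphi_pos : forall w, Om w -> 0 < phi w)
  (hphi_der : forall w, Om w -> derivable_pt phi w)
  (hden : forall w, Om w -> 2 * r * Rpower (phi w) (n + 1) + c1 <> 0)
  (hG : forall w, Om w ->
     derivable_pt_lim G (phi w)
       (n * (Rpower (phi w) n - 1) / (2 * r * Rpower (phi w) (n + 1) + c1)))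
  (himp : forall w, Om w -> G (phi w) = w + c2) :
  let p := 4 * (1 + / n) ^ 2 * r ^ 2 in
  let u := fun t x =>
    phi (t - F x) * Rpower (Rabs (xi x)) (/ (2 * n + 2)) * exp (r / n * F x) in
  exists Ut Utt Ux : R -> R -> R,
    (forall t x, Om (t - F x) ->
       derivable_pt_lim (fun s => u s x) t (Ut t x) /\
       derivable_pt_lim (fun s => Ut s x) t (Utt t x) /\
       derivable_pt_lim (fun y => u t y) x (Ux t x)) /\
    (forall t x, Om (t - F x) ->
       exists Wx : R,
         derivable_pt_lim (fun y => Rpower (u t y) n * Ux t y) x Wx /\
         Rpower (Rabs (xi x)) (- ((3 * n + 4) / (2 * n + 2))) * exp (r * F x) * Utt t x
         - Wx
         - (xi' x ^ 2 - 2 * xi x * xi'' x - p) / (4 * (n + 1) * xi x ^ 2)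
             * Rpower (u t x) (n + 1) = 0).
Proof.
  exact (travelling_wave_solution n r c1 c2 xi xi' xi'' F G phi Om hn0 hn1
           hxi' hxi'' hxi_nz hF hOm hphi_pos hphi_der hden hG himp).
Qed.
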